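(* For every real $M\ge0$ and positive integers $N,K$, with $\mathcal{N}=\{1,\dots,N\}$, \[ \max_{s\in\{1,\dots,\lceil\min\{N,K\}/4\rceil\}}\bar{R}_s(M,\mathcal{N},s)\ge\frac{1}{48}R(M,N,K). \]
   Context: Caching problem: a server holds $N$ files of $F$ bits each, connected through a shared error-free link to users each with a cache of $MF$ bits. In the placement phase each user stores an arbitrary function of the files of at most $MF$ bits; in the delivery phase the demand vector is revealed, the server sends a message over the shared link, and each user must reconstruct its requested file from the message and its cache. The rate is message length divided by $F$. For $s\le N$, $\bar{R}_s(M,\mathcal{N},s)$ is the optimal expected rate (infimum over all placement and delivery schemes of the expected rate, achievable with vanishing error probability for all large $F$) for a system with $s$ users whose demand vector is uniformly distributed over vectors in $\mathcal{N}^s$ with $s$ distinct entries (i.e., files chosen uniformly at random without replacement). The function $R$ is defined by $R(M,N,K)=(1-M/N)\min\{\tfrac{N}{M}(1-(1-M/N)^K),N\}$ for $M\in(0,N]$, $R(0,N,K)=\min\{N,K\}$, and $R(M,N,K)=0$ for $M>N$. *)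

From HB Require Import structures.
From mathcomp Require Import all_boot all_order all_algebra.
From mathcomp Require Import boolp classical_sets reals.

Set Implicit Arguments.
Unset Strict Implicit.
Unset Printing Implicit Defensive.

Import Order.TTheory GRing.Theory Num.Theory.
Local Open Scope ring_scope.

Definition files (N F : nat) := {ffun 'I_N -> F.-tuple bool}.

Definition demand (N s : nat) := {ffun 'I_s -> 'I_N}.

(* The support of the demand distribution: demand vectors with s distinct
   entries (files chosen without replacement); the distribution is uniform. *)
Definition distinct_demands (N s : nat) : {set demand N s} :=
  [set d : demand N s | injectiveb d].

(* A caching scheme for N files of F bits, s users with caches of C bits.
   - placement: user k stores an arbitrary function of the files (C bits);
   - delivery: for each demand d the server sends an arbitrary function of
     the files, of length [len d] bits;
   - decoding: user k, knowing d, decodes from the message and its cache. *)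
Record scheme (N s F C : nat) := Scheme {
  cache : 'I_s -> files N F -> C.-tuple bool;
  len : demand N s -> nat;
  msg : forall d : demand N s, files N F -> (len d).-tuple bool;
  dec : forall d : demand N s, 'I_s -> (len d).-tuple bool ->
          C.-tuple bool -> F.-tuple bool
}.
Arguments msg {N s F C} _ _ _.
Arguments dec {N s F C} _ _ _ _ _.
Arguments cache {N s F C} _ _ _.
Arguments len {N s F C} _ _.

Section SchemeDefs.
Variables (R : realType) (N s F C : nat) (sch : scheme N s F C).

Definition decoding_error (d : demand N s) (W : files N F) : bool :=
  [exists k : 'I_s,
     dec sch d k (msg sch d W) (cache sch k W) != W (d k)].

(* Error probability for demand d, files i.i.d. uniform over {0,1}^F. *)
Definition error_prob (d : demand N s) : R :=
  (#|[set W : files N F | decoding_error d W]|)%:R / (#|{: files N F}|)%:R.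

Definition expected_rate : R :=
  (\sum_(d in distinct_demands N s) ((len sch d)%:R / F%:R))
    / (#|distinct_demands N s|)%:R.

End SchemeDefs.

Definition achievable_rate (R : realType) (M : R) (N s : nat) (r : R) : Prop :=
  forall eps : R, 0 < eps ->
  exists F0 : nat, forall F : nat, (F0 <= F)%N ->
    exists C : nat, (C%:R <= M * F%:R) /\
    exists sch : scheme N s F C,
      (forall d, d \in distinct_demands N s -> error_prob R sch d <= eps) /\
      expected_rate R sch <= r.

Definition Rbar (R : realType) (M : R) (N s : nat) : R :=
  inf [set r : R | achievable_rate M N s r].

Definition Rfun (R : realType) (M : R) (N K : nat) : R :=
  if M == 0 then (minn N K)%:R
  else if (0 < M) && (M <= N%:R) then
    (1 - M / N%:R) *
      Num.min ((N%:R / M) * (1 - (1 - M / N%:R) ^+ K)) (N%:R)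
  else 0.

From HB Require Import structures.
From mathcomp Require Import all_boot all_order all_algebra all_fingroup.
From mathcomp Require Import boolp classical_sets reals.
From mathcomp Require Import zify ring lra.
Import Order.TTheory GRing.Theory Num.Theory.

Set Implicit Arguments.
Unset Strict Implicit.
Unset Printing Implicit Defensive.

(* Take [b] demand vectors whose [b s] requested files are pairwise distinct.
   Whenever every user decodes, the caches, the [b] messages and the
   unrequested files determine all [N] files; if each demand fails with
   probability at most [1 / (2 b)], this happens for at least half of the
   [2 ^ (F N)] file realizations, which gives the cut-set bound
   [b s F <= s C + (sum of the b message lengths) + 1].  Relabelling one such
   family by every permutation of the files and averaging turns this into
   [s (1 - M / b) - 1 / F <= expected rate], hence [Rbar_s >= s (1 - M / b)]
   whenever [b s <= N].  It remains to choose [(s, b)]: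
   [(ceil(min(N, K) / 4), 1)] when [M <= 1/2], [(1, N)] when [N <= 4 M], and
   [b] about [2 M] with [s] as large as fits otherwise, and to compare with the
   elementary bounds
   [R(M, N, K) <= min(N, K)] and [R(M, N, K) <= (1 - M / N) N / M]. *)

Section PermExtension.
Variables (T : finType) (s : nat).

Definition completion (f : 'I_s -> T) : seq T :=
  [seq f k | k <- enum 'I_s] ++ [seq x <- enum T | x \notin [seq f k | k <- enum 'I_s]].

Lemma mem_completion f x : x \in completion f.
Proof. by rewrite mem_cat mem_filter mem_enum andbT; case: (x \in _). Qed.

Lemma completion_uniq f : injective f -> uniq (completion f).
Proof.
move=> f_inj; rewrite cat_uniq map_inj_uniq ?enum_uniq //= filter_uniq ?enum_uniq // andbT.
by apply/hasPn => x; rewrite mem_filter => /andP [].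
Qed.

Lemma size_completion f : injective f -> size (completion f) = #|T|.
Proof.
move=> f_inj; rewrite -(card_uniqP (completion_uniq f_inj)).
by apply: eq_card => x; rewrite mem_completion.
Qed.

Lemma nth_completion f x0 (k : 'I_s) : nth x0 (completion f) k = f k.
Proof.
by rewrite nth_cat size_map size_enum_ord ltn_ord (nth_map k) ?size_enum_ord // nth_ord_enum.
Qed.

Lemma index_completion f (k : 'I_s) : injective f -> index (f k) (completion f) = k.
Proof.
by move=> f_inj; rewrite index_cat map_f ?mem_enum // index_map // index_enum_ord.
Qed.

Lemma perm_extend (e d : 'I_s -> T) : injective e -> injective d ->
  exists t : {perm T}, forall k, t (e k) = d k.
Proof.
move=> e_inj d_inj.
pose g x := nth x (completion d) (index x (completion e)).
have g_inj : injective g.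
  have lt_index x : index x (completion e) < size (completion d).
    by rewrite size_completion // -(size_completion e_inj) index_mem mem_completion.
  move=> x y; rewrite /g (set_nth_default y x (lt_index x)).
  move/eqP; rewrite (nth_uniq y (lt_index x) (lt_index y) (completion_uniq d_inj)).
  by move/eqP/(congr1 (nth x (completion e))); rewrite !nth_index ?mem_completion.
by exists (perm g_inj) => k; rewrite permE /g index_completion // nth_completion.
Qed.

End PermExtension.

Section Relabel.
Variables (N s : nat).

Definition relabel (t : {perm 'I_N}) (d : demand N s) : demand N s :=
  [ffun k => t (d k)].

Lemma relabel_inj t : injective (relabel t).
Proof.
move=> d d' /ffunP eq_dd'; apply/ffunP => k.
by apply: (@perm_inj _ t); have := eq_dd' k; rewrite !ffunE.
Qed.

Lemma relabel_distinct t d :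
  (relabel t d \in distinct_demands N s) = (d \in distinct_demands N s).
Proof.
rewrite !inE; apply/injectiveP/injectiveP => d_inj k k' eq_kk'; apply: d_inj.
  by rewrite !ffunE eq_kk'.
by move: eq_kk'; rewrite !ffunE => /perm_inj.
Qed.

(* Relabelling acts transitively on demand vectors with distinct entries. *)
Lemma sum_distinct_demands_relabel (g : demand N s -> nat) (e : demand N s) :
  injective e ->
  (\sum_(d in distinct_demands N s) g d) * #|{perm 'I_N}|
  = #|distinct_demands N s| * \sum_(t : {perm 'I_N}) g (relabel t e).
Proof.
move=> e_inj; rewrite mulnC -[in LHS]sum_nat_const.
transitivity (\sum_(d in distinct_demands N s) \sum_(t : {perm 'I_N}) g (relabel t d)).
  rewrite [RHS]exchange_big; apply: eq_bigr => t _.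
  by rewrite (reindex_inj (@relabel_inj t)); apply: eq_bigl => d; rewrite relabel_distinct.
rewrite -sum_nat_const; apply: eq_bigr => d; rewrite inE => /injectiveP d_inj.
have [tau tau_d] := perm_extend d_inj e_inj.
rewrite (reindex_inj (mulgI tau)); apply: eq_bigr => t _; congr g.
by apply/ffunP => k; rewrite !ffunE permM tau_d.
Qed.

End Relabel.

(* [inord] sends out-of-range indices to file 0, so blocks are only
   meaningful when [b * s <= n.+1]. *)
Definition block_demand n s b (j : 'I_b) : demand n.+1 s :=
  [ffun k : 'I_s => inord (j * s + k)].

Lemma block_demand_disjoint n s b (j j' : 'I_b) (k k' : 'I_s) : b * s <= n.+1 ->
  block_demand n s j k = block_demand n s j' k' -> j = j' /\ k = k'.
Proof.
move=> bs_le_N; rewrite !ffunE => /(congr1 val).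
have index_lt (i : 'I_b) (l : 'I_s) : i * s + l < n.+1.
  by apply: leq_trans bs_le_N; have := ltn_ord i; have := ltn_ord l; nia.
rewrite /= !inordK // => eq_index.
have eq_k : k = k' :> nat by have := congr1 (modn^~ s) eq_index; rewrite !modnMDl !modn_small.
move: eq_index; rewrite eq_k => /addIn /eqP; rewrite eqn_mul2r => /orP [/eqP s0|/eqP eq_j].
  by have := ltn_ord k; lia.
by split; apply: val_inj.
Qed.

Lemma block_demand_distinct n s b (j : 'I_b) : b * s <= n.+1 ->
  block_demand n s j \in distinct_demands n.+1 s.
Proof.
by move=> bs_le_N; rewrite inE; apply/injectiveP => k k' /(block_demand_disjoint bs_le_N) [].
Qed.

Lemma card_distinct_demands_gt0 n s : s <= n.+1 -> 0 < #|distinct_demands n.+1 s|.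
Proof.
move=> s_le_N; apply/card_gt0P; exists (block_demand n s (ord0 : 'I_1)).
by apply: block_demand_distinct; rewrite mul1n.
Qed.

Lemma card_files N F : #|{: files N F}| = 2 ^ (F * N).
Proof. by rewrite card_ffun card_tuple card_bool card_ord expnM. Qed.

Lemma card_bigcup_le (I T : finType) (A : I -> {set T}) :
  #|\bigcup_i A i| <= \sum_i #|A i|.
Proof.
elim/big_rec2: _ => [|i n B _ IH]; first by rewrite cards0.
by apply: leq_trans (leq_card_setU _ _) _; rewrite leq_add2l.
Qed.

Local Open Scope ring_scope.

Section CutSet.
Variables (R : realType) (N s F C : nat) (sch : scheme N s F C).
Variables (b : nat) (ds : 'I_b -> demand N s).
Hypothesis b_gt0 : (0 < b)%N.
Hypothesis ds_disjoint : forall j j' k k', ds j k = ds j' k' -> j = j' /\ k = k'.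
Hypothesis ds_error : forall j, error_prob R sch (ds j) <= 1 / (2 * b)%:R.

Let demanded := [set ds p.1 p.2 | p : 'I_b * 'I_s].
Let failure j := [set W : files N F | decoding_error sch (ds j) W].
Let good := ~: \bigcup_j failure j.

Lemma card_demanded : #|demanded| = (b * s)%N.
Proof.
rewrite card_imset ?card_prod ?card_ord // => [[j k] [j' k']] /=.
by move/ds_disjoint=> [-> ->].
Qed.

Lemma card_failure j : (2 * b * #|failure j| <= #|{: files N F}|)%N.
Proof.
have files_gt0 : (0 : R) < #|{: files N F}|%:R by rewrite ltr0n card_files expn_gt0.
have b2_gt0 : (0 : R) < 2 * b%:R by rewrite mulr_gt0 ?ltr0n.
have := ds_error j; rewrite /error_prob ler_pdivrMr // -(ler_nat R) !natrM.
by rewrite mul1r mulrC ler_pdivlMr // mulrC.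
Qed.

Lemma card_files_le_good : (#|{: files N F}| <= 2 * #|good|)%N.
Proof.
have sum_failure : (b * (2 * \sum_j #|failure j|) <= b * #|{: files N F}|)%N.
  rewrite mulnCA mulnA big_distrr /= -[X in (_ <= X * _)%N]card_ord -sum_nat_const.
  by apply: leq_sum => j _; rewrite card_failure.
move: sum_failure; rewrite leq_pmul2l // => sum_failure.
rewrite /good; have := cardsC (\bigcup_j failure j); have := card_bigcup_le failure.
move: sum_failure; rewrite !card_files; lia.
Qed.

Let encode (W : files N F) :=
  ([ffun k => cache sch k W],
   [ffun j => msg sch (ds j) W] : {dffun forall j : 'I_b, (len sch (ds j)).-tuple bool},
   [ffun x : {x : 'I_N | x \notin demanded} => W (val x)]).

Lemma encode_inj : {in good &, injective encode}.
Proof.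
move=> W W'; rewrite !inE => /bigcupP ok_W /bigcupP ok_W' [eq_cache eq_msg eq_rest].
apply/ffunP => x; have [/imsetP [[j k] _ ->]|x_undemanded] := boolP (x \in demanded).
  have decoded V : V \notin failure j ->
      dec sch (ds j) k (msg sch (ds j) V) (cache sch k V) = V (ds j k).
    by rewrite inE negb_exists => /forallP /(_ k); rewrite negbK => /eqP.
  rewrite -decoded; last by apply/negP => fail_W; apply: ok_W; exists j.
  rewrite -decoded; last by apply/negP => fail_W'; apply: ok_W'; exists j.
  move/ffunP: eq_msg => /(_ j); move/ffunP: eq_cache => /(_ k).
  by rewrite !ffunE => -> ->.
by move/ffunP: eq_rest => /(_ (exist _ x x_undemanded)); rewrite !ffunE.
Qed.

Lemma card_good_le :
  (#|good| <= 2 ^ (s * C + \sum_j len sch (ds j) + F * (N - b * s)))%N.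
Proof.
apply: leq_trans (@leq_card_in _ _ encode (mem good) encode_inj) _.
rewrite !card_prod !card_dep_ffun !foldrE !big_map -!enumT !big_enum /=.
rewrite !(eq_bigr _ (fun i _ => card_tuple _ _)) card_bool !prod_nat_const -expn_sum.
have card_undemanded : #|{: {x : 'I_N | x \notin demanded}}| = (N - b * s)%N.
  have := cardsC demanded; rewrite card_demanded card_ord card_sig.
  suff -> : #|[pred x | x \notin demanded]| = #|~: demanded| by lia.
  by apply: eq_card => x; rewrite !inE.
by rewrite card_undemanded -!expnM -!expnD mulnC card_ord.
Qed.

Lemma cutset_bound : (s * b * F <= \sum_j len sch (ds j) + s * C + 1)%N.
Proof.
have bs_le_N : (b * s <= N)%N.
  by have := max_card (mem demanded); rewrite card_demanded card_ord.
have : (2 ^ (F * N) <= 2 ^ (1 + (s * C + \sum_j len sch (ds j) + F * (N - b * s))))%N.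
  rewrite -card_files expnD expn1; apply: leq_trans card_files_le_good _.
  by rewrite leq_mul2l card_good_le.
rewrite leq_exp2l // mulnBr.
have : (F * (b * s) <= F * N)%N by rewrite leq_mul2l bs_le_N orbT.
lia.
Qed.

End CutSet.

(* [cutset_bound] for every relabelling of the [b] blocks, averaged over all
   relabellings. *)
Lemma cutset_bound_avg (R : realType) n s F C (sch : scheme n.+1 s F C) b :
  (0 < b)%N -> (b * s <= n.+1)%N ->
  (forall d, d \in distinct_demands n.+1 s -> error_prob R sch d <= 1 / (2 * b)%:R) ->
  (#|distinct_demands n.+1 s| * (s * b * F) <=
     b * \sum_(d in distinct_demands n.+1 s) len sch d
     + #|distinct_demands n.+1 s| * (s * C + 1))%N.
Proof.
move=> b_gt0 bs_le_N err.
set D := distinct_demands n.+1 s; set P := #|{perm 'I_n.+1}|.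
have P_gt0 : (0 < P)%N by apply/card_gt0P; exists 1%g.
pose ds t (j : 'I_b) := relabel t (block_demand n s j).
have cut t : (s * b * F <= \sum_j len sch (ds t j) + (s * C + 1))%N.
  rewrite addnA; apply: (cutset_bound (R := R)) b_gt0 _ _ => [j j' k k'|j].
    rewrite !ffunE => /perm_inj eq_jk.
    by apply: (block_demand_disjoint bs_le_N); rewrite !ffunE.
  by apply: err; rewrite relabel_distinct block_demand_distinct.
have avg j : (#|D| * \sum_t len sch (ds t j) = (\sum_(d in D) len sch d) * P)%N.
  symmetry; apply: sum_distinct_demands_relabel; apply/injectiveP.
  by have := block_demand_distinct j bs_le_N; rewrite inE.
have sum_cut :
    (P * (s * b * F) <= \sum_j \sum_t len sch (ds t j) + P * (s * C + 1))%N.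
  rewrite exchange_big -[X in (X <= _)%N]sum_nat_const.
  rewrite -[X in (_ <= _ + X)%N]sum_nat_const.
  by rewrite -big_split; apply: leq_sum => t _; apply: cut.
rewrite -(leq_pmul2r P_gt0); have := leq_mul (leqnn #|D|) sum_cut.
rewrite mulnDr big_distrr (eq_bigr _ (fun j _ => avg j)) sum_nat_const card_ord.
set X := (\sum_(d in D) len sch d)%N.
have -> : (#|D| * (s * b * F) * P = #|D| * (P * (s * b * F)))%N by ring.
suff -> : ((b * X + #|D| * (s * C + 1)) * P
           = b * (X * P) + #|D| * (P * (s * C + 1)))%N by [].
ring.
Qed.

Lemma expected_rate_lb (R : realType) (M : R) n s F C (sch : scheme n.+1 s F C) b :
  (0 < b)%N -> (b * s <= n.+1)%N -> (0 < F)%N -> C%:R <= M * F%:R ->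
  (forall d, d \in distinct_demands n.+1 s -> error_prob R sch d <= 1 / (2 * b)%:R) ->
  s%:R * (1 - M / b%:R) - F%:R^-1 <= expected_rate R sch.
Proof.
move=> b_gt0 bs_le_N F_gt0 C_le err.
have := cutset_bound_avg b_gt0 bs_le_N err.
set D := distinct_demands n.+1 s; set x := (\sum_(d in D) len sch d)%N.
have D_gt0 : (0 : R) < #|D|%:R.
  by rewrite ltr0n card_distinct_demands_gt0 // (leq_trans _ bs_le_N) ?leq_pmull.
have bR_gt0 : (0 : R) < b%:R by rewrite ltr0n.
have FR_gt0 : (0 : R) < F%:R by rewrite ltr0n.
rewrite /expected_rate -mulr_suml -natr_sum -/x ler_pdivlMr // ler_pdivlMr //.
rewrite -(ler_nat R) !(natrD, natrM) => key.
set m := M / b%:R; have M_eq : M = m * b%:R by rewrite /m divfK ?gt_eqF.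
have sC_le : #|D|%:R * s%:R * C%:R <= #|D|%:R * s%:R * (m * b%:R * F%:R) :> R.
  by rewrite ler_wpM2l ?mulr_ge0 // -M_eq.
have D_le : (#|D|%:R : R) <= b%:R * #|D|%:R by rewrite ler_peMl ?ler1n // ltW.
have -> : (s%:R * (1 - m) - F%:R^-1) * #|D|%:R * F%:R
    = s%:R * #|D|%:R * F%:R - s%:R * m * #|D|%:R * F%:R - #|D|%:R :> R.
  by field; rewrite gt_eqF.
rewrite -(ler_pM2l bR_gt0); lra.
Qed.

Section Uncoded.
Variables (N s F : nat).

Definition uncoded_bit (d : demand N s) (W : files N F) (i : nat) : bool :=
  if [pick k : 'I_s | val k == i %/ F]%N is Some k then nth false (W (d k)) (i %% F)
  else false.

(* The uncoded message concatenates the [s] requested files. *)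
Definition uncoded : scheme N s F 0 :=
  @Scheme N s F 0 (fun _ _ => [tuple]) (fun _ => s * F)%N
    (fun d W => [tuple uncoded_bit d W i | i < s * F])
    (fun d k m _ => [tuple nth false m (k * F + j) | j < F]).

Lemma uncoded_dec d k W : dec uncoded d k (msg uncoded d W) (cache uncoded k W) = W (d k).
Proof.
apply: eq_from_tnth => j; rewrite /= tnth_mktuple.
have kj_lt : (k * F + j < s * F)%N by have := ltn_ord k; have := ltn_ord j; nia.
rewrite (nth_map (Ordinal kj_lt)) ?size_enum_ord // nth_enum_ord //= /uncoded_bit.
have F_gt0 : (0 < F)%N by have := ltn_ord j; lia.
have kj_div : ((k * F + j) %/ F)%N = k by rewrite divnMDl // divn_small // addn0.
case: pickP => [k' /eqP k'_eq|/(_ k)]; last by rewrite kj_div eqxx.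
have -> : k' = k by apply: val_inj; rewrite /= k'_eq kj_div.
by rewrite modnMDl modn_small // (tnth_nth false).
Qed.

End Uncoded.

Lemma uncoded_achievable (R : realType) (M : R) n s : 0 <= M -> (s <= n.+1)%N ->
  achievable_rate M n.+1 s s%:R.
Proof.
move=> M_ge0 s_le_N eps eps_gt0; exists 1%N => F F_gt0; exists 0%N.
split; first by rewrite mulr_ge0.
exists (uncoded n.+1 s F); split.
  move=> d _; rewrite /error_prob.
  suff -> : #|[set W | decoding_error (uncoded n.+1 s F) d W]| = 0%N by rewrite mul0r ltW.
  apply: eq_card0 => W; rewrite !inE /decoding_error; apply/negbTE.
  by rewrite negb_exists; apply/forallP => k; rewrite uncoded_dec eqxx.
have FR_neq0 : (F%:R : R) != 0 by rewrite pnatr_eq0 -lt0n.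
rewrite /expected_rate /=; under eq_bigr do rewrite natrM mulfK //.
by rewrite sumr_const -[_ *+ _]mulr_natr mulfK ?pnatr_eq0 -?lt0n ?card_distinct_demands_gt0.
Qed.

Lemma achievable_rate_lb (R : realType) (M : R) n s b r :
  (0 < b)%N -> (b * s <= n.+1)%N -> achievable_rate M n.+1 s r ->
  s%:R * (1 - M / b%:R) <= r.
Proof.
move=> b_gt0 bs_le_N r_ach; rewrite leNgt; apply/negP => r_lt.
set L := s%:R * (1 - M / b%:R) in r_lt.
have eps_gt0 : (0 : R) < 1 / (2 * b)%:R by rewrite divr_gt0 // ltr0n muln_gt0.
have [F0 F0_ok] := r_ach _ eps_gt0.
pose F := maxn F0 (Num.truncn (L - r)^-1).+1.
have F_gt0 : (0 < F)%N by rewrite leq_max orbT.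
have inv_F_lt : F%:R^-1 < L - r.
  rewrite -[X in X < _]mul1r ltr_pdivrMr ?ltr0n // -ltr_pdivrMl ?subr_gt0 // mulr1.
  by apply: lt_le_trans (truncnS_gt _) _; rewrite ler_nat leq_maxr.
have [C [C_le [sch [err rate_le]]]] := F0_ok F (leq_maxl _ _).
have := expected_rate_lb b_gt0 bs_le_N F_gt0 C_le err.
rewrite -/L; lra.
Qed.

Lemma Rbar_ge (R : realType) (M : R) N s b : 0 <= M -> (0 < s)%N -> (0 < b)%N ->
  (b * s <= N)%N -> s%:R * (1 - M / b%:R) <= Rbar M N s.
Proof.
case: N => [|n] M_ge0 s_gt0 b_gt0 bs_le_N; first by nia.
apply: lb_le_inf => [|r]; last exact: achievable_rate_lb.
by exists s%:R; apply: uncoded_achievable => //; apply: leq_trans bs_le_N; rewrite leq_pmull.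
Qed.

Lemma bernoulli_ineq (R : realDomainType) (x : R) n :
  -1 <= x -> 1 + n%:R * x <= (1 + x) ^+ n.
Proof.
move=> x_ge; elim: n => [|n IH]; first by rewrite mul0r addr0 expr0.
have x1_ge0 : 0 <= 1 + x by rewrite -lerBlDl sub0r.
have := ler_wpM2r x1_ge0 IH; rewrite exprSr -natr1.
have : 0 <= n%:R * x * x by rewrite -mulrA mulr_ge0 ?ler0n // -expr2 sqr_ge0.
nra.
Qed.

Section RfunBounds.
Variables (R : realType) (M : R) (N K : nat).
Hypothesis N_gt0 : (0 < N)%N.

Let NR_gt0 : (0 : R) < N%:R. Proof. by rewrite ltr0n. Qed.

Lemma Rfun_le_minn : 0 <= M -> Rfun M N K <= (minn N K)%:R.
Proof.
rewrite /Rfun le_eqVlt eq_sym => /orP [/eqP ->|M_gt0]; first by rewrite eqxx.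
rewrite gt_eqF // M_gt0 /=; case: ifP => [M_le_N|_]; last exact: ler0n.
set q := M / N%:R; set c := (1 - q) ^+ K; set X := N%:R / M * (1 - c).
have q_ge0 : 0 <= q by rewrite divr_ge0 ?ltW.
have q_le1 : q <= 1 by rewrite ler_pdivrMr // mul1r.
have c_le1 : c <= 1 by rewrite exprn_ile1 ?subr_ge0 //; lra.
have NM_q : N%:R / M * q = 1 by rewrite mulrA divfK ?gt_eqF // divff ?gt_eqF.
have X_le_K : X <= K%:R.
  have bern : 1 - K%:R * q <= c.
    by have := bernoulli_ineq K (_ : -1 <= - q); rewrite mulrN; apply; lra.
  apply: le_trans (_ : X <= N%:R / M * (K%:R * q)) _; last by rewrite mulrCA NM_q mulr1.
  by apply: ler_wpM2l; [apply: divr_ge0|]; lra.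
have X_ge0 : 0 <= X by apply: mulr_ge0; [apply: divr_ge0|]; lra.
have min_ge0 : 0 <= Num.min X N%:R by rewrite le_min X_ge0 ler0n.
apply: le_trans (_ : Num.min X N%:R <= _); first by rewrite ler_piMl //; lra.
by rewrite /minn; case: ltnP => _; rewrite ge_min ?X_le_K ?lexx ?orbT.
Qed.

Lemma Rfun_le_ratio : 0 < M -> M <= N%:R -> Rfun M N K <= (1 - M / N%:R) * (N%:R / M).
Proof.
move=> M_gt0 M_le_N; rewrite /Rfun gt_eqF // M_gt0 M_le_N /=.
have q_le1 : M / N%:R <= 1 by rewrite ler_pdivrMr // mul1r.
have c_ge0 : 0 <= (1 - M / N%:R) ^+ K by rewrite exprn_ge0 // subr_ge0.
apply: ler_wpM2l; first by rewrite subr_ge0.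
rewrite ge_min; apply/orP; left; rewrite ler_piMr ?divr_ge0 ?(ltW M_gt0) //; lra.
Qed.

Lemma Rfun_le0 : N%:R <= M -> Rfun M N K <= 0.
Proof.
move=> N_le_M; have M_gt0 : 0 < M by apply: lt_le_trans N_le_M.
rewrite /Rfun gt_eqF // M_gt0 /=; case: ifP => // M_le_N.
by rewrite [M](@le_anti _ _ M N%:R) ?M_le_N // divff ?gt_eqF // subrr mul0r.
Qed.

Lemma Rfun_le_div : 0 < M -> Rfun M N K <= N%:R / M.
Proof.
move=> M_gt0; have NM_ge0 : 0 <= N%:R / M by rewrite divr_ge0 ?ltW.
have [M_le_N|N_lt_M] := lerP M N%:R; last exact: le_trans (Rfun_le0 (ltW N_lt_M)) _.
apply: le_trans (Rfun_le_ratio M_gt0 M_le_N) _.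
by rewrite ler_piMl // gerBl divr_ge0 ?(ltW M_gt0).
Qed.

End RfunBounds.

Section MaxRbar.
Variables (R : realType) (M : R) (N K S : nat).
Hypotheses (M_ge0 : 0 <= M) (S_gt0 : (0 < S)%N) (S_le_N : (S <= N)%N).
Hypothesis minNK_le : (minn N K <= 4 * S)%N.

Local Notation max_Rbar := (\big[Num.max/0]_(1 <= s < S.+1) Rbar M N s).

Lemma max_Rbar_ge0 : 0 <= max_Rbar.
Proof. exact: bigmax_ge_id. Qed.

Lemma Rbar_le_max s : (0 < s)%N -> (s <= S)%N -> Rbar M N s <= max_Rbar.
Proof. by move=> s_gt0 s_le_S; apply: le_bigmax_seq; rewrite // mem_index_iota s_gt0. Qed.

Lemma half_le_max_Rbar s b : (0 < s)%N -> (s <= S)%N -> (0 < b)%N -> (b * s <= N)%N ->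
  2 * M <= b%:R -> s%:R / 2 <= max_Rbar.
Proof.
move=> s_gt0 s_le_S b_gt0 bs_le_N M_le_b.
apply: le_trans (Rbar_le_max s_gt0 s_le_S).
apply: le_trans (Rbar_ge M_ge0 s_gt0 b_gt0 bs_le_N).
have M_b : M / b%:R <= 1 / 2 by rewrite ler_pdivrMr ?ltr0n //; lra.
have : s%:R * (M / b%:R) <= s%:R * (1 / 2) by rewrite ler_wpM2l ?ler0n.
lra.
Qed.

Let N_gt0 : (0 < N)%N. Proof. exact: leq_trans S_gt0 S_le_N. Qed.
Let NR_gt0 : (0 : R) < N%:R. Proof. by rewrite ltr0n N_gt0. Qed.
Let minNK_leR : (minn N K)%:R <= 4 * S%:R :> R. Proof. by rewrite -natrM ler_nat. Qed.

Lemma Rfun_le_max_Rbar_small_memory : M <= 1 / 2 -> Rfun M N K / 48 <= max_Rbar.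
Proof.
move=> M_small; have S_half : S%:R / 2 <= max_Rbar.
  by apply: (half_le_max_Rbar S_gt0 (leqnn S) (ltn0Sn 0)); rewrite ?mul1n //; lra.
have := Rfun_le_minn K N_gt0 M_ge0; have := minNK_leR; have : (0 : R) <= S%:R by [].
lra.
Qed.

Lemma Rfun_le_max_Rbar_large_memory : N%:R <= 4 * M -> Rfun M N K / 48 <= max_Rbar.
Proof.
move=> M_large; have [N_le_M|M_lt_N] := lerP N%:R M.
  by have := Rfun_le0 K N_gt0 N_le_M; have := max_Rbar_ge0; lra.
have M_gt0 : 0 < M by have := NR_gt0; lra.
have q_le1 : M / N%:R <= 1 by rewrite ler_pdivrMr ?mul1r ?(ltW M_lt_N).
have := Rbar_le_max (ltn0Sn 0) S_gt0.
have := Rbar_ge M_ge0 (ltn0Sn 0) N_gt0 (eq_leq (muln1 N)); rewrite mul1r.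
have := Rfun_le_ratio K N_gt0 M_gt0 (ltW M_lt_N).
have : (1 - M / N%:R) * (N%:R / M) <= (1 - M / N%:R) * 4.
  by rewrite ler_wpM2l ?subr_ge0 // ler_pdivrMr.
lra.
Qed.

(* Witness: [b] just above [2 M] disjoint blocks of [min S (N / b)] users. *)
Lemma Rfun_le_max_Rbar_medium_memory :
  1 / 2 < M -> 4 * M < N%:R -> Rfun M N K / 48 <= max_Rbar.
Proof.
move=> M_gt_half M_lt_N; have M_gt0 : 0 < M by lra.
pose b := (Num.truncn (2 * M)).+1.
have b_gt : 2 * M < b%:R := truncnS_gt _.
have b_le : b%:R <= 2 * M + 1 by rewrite /b -natr1 lerD2r truncn_le; lra.
have b_le_N : (b <= N)%N by rewrite -(ler_nat R); lra.
pose s := minn S (N %/ b).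
have s_gt0 : (0 < s)%N by rewrite leq_min S_gt0 divn_gt0.
have bs_le_N : (b * s <= N)%N.
  by rewrite mulnC; apply: leq_trans (leq_divM N b); rewrite leq_mul2r geq_minr orbT.
have := half_le_max_Rbar s_gt0 (geq_minl _ _) (ltn0Sn _) bs_le_N (ltW b_gt).
have : (0 : R) <= s%:R by [].
suff : Rfun M N K <= 8 * s%:R by lra.
rewrite /s; case: (leqP S (N %/ b)) => [S_le|lt_S].
  have := Rfun_le_minn K N_gt0 M_ge0; have := minNK_leR.
  by have : (0 : R) <= S%:R by []; lra.
set q := (N %/ b)%N.
have N_lt : N%:R < 2 * q%:R * b%:R :> R.
  rewrite -natrM -natrM ltr_nat; apply: leq_trans (ltn_ceil N (ltn0Sn _ : (0 < b)%N)) _.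
  by rewrite leq_mul2r -addn1 mul2n -addnn leq_add2l divn_gt0 ?b_le_N ?orbT.
have qb_le : q%:R * b%:R <= q%:R * (4 * M) :> R by rewrite ler_wpM2l ?ler0n //; lra.
apply: le_trans (Rfun_le_div K N_gt0 M_gt0) _; rewrite ler_pdivrMr //; lra.
Qed.

End MaxRbar.

Theorem lemma3 (R : realType) (M : R) (N K : nat) :
  0 <= M -> (0 < N)%N -> (0 < K)%N ->
  \big[Num.max/0]_(1 <= s < ((minn N K + 3) %/ 4).+1) Rbar M N s
    >= Rfun M N K / 48.
Proof.
move=> M_ge0 N_gt0 K_gt0; set S := (_ %/ 4)%N.
have S_gt0 : (0 < S)%N by rewrite /S; lia.
have S_le_N : (S <= N)%N by rewrite /S; lia.
have minNK_le : (minn N K <= 4 * S)%N by rewrite /S; lia.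
have [M_small|M_gt_half] := lerP M (1 / 2).
  by apply: Rfun_le_max_Rbar_small_memory.
have [M_large|M_lt_N] := lerP N%:R (4 * M).
  by apply: Rfun_le_max_Rbar_large_memory.
by apply: Rfun_le_max_Rbar_medium_memory.
Qed.
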